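(* Let ${\bf r}=(r_0,r_1,r_2,\dots)$ be a sequence of nonnegative integers with only finitely many nonzero entries, put $n=\sum_{d\ge1}r_d$ and $\ell=-\sum_{d\ge0}(d-1)r_d$, and assume $\ell\ge1$ (so $r_0\ge1$). Then, as polynomials in $x$, $$\mathcal H_{\bf r}(x):=\sum_{F\in\mathscr F({\bf r})}\prod_{v\in I(F)}\frac{((d_v-1)h_v+1)x+1-h_v}{d_vh_v}=\frac{\ell}{r_0}\binom{r_0x}{r_0x-n,\,r_1,\,r_2,\dots},$$ where the right-hand side means the polynomial $\frac{\ell}{r_0}\cdot\frac{(r_0x)(r_0x-1)\cdots(r_0x-n+1)}{r_1!\,r_2!\cdots}$.
   Context: A plane tree is an unlabelled rooted tree in which the children of every vertex are linearly ordered. A plane forest is a finite linearly ordered sequence of plane trees. For vertices $u,v$ in a tree, $v$ is a descendant of $u$ if $u$ lies on the path from the root to $v$ (so $u$ is a descendant of itself). The degree $d_v$ of a vertex $v$ is its number of children; $v$ is internal if $d_v\ge1$, otherwise a leaf. $I(F)$ denotes the set of internal vertices of a forest $F$. The hook length $h_v$ of an internal vertex $v$ is the number of internal vertices among the descendants of $v$ (including $v$ itself). A plane forest is of type ${\bf r}=(r_0,r_1,\dots)$ if it has exactly $r_i$ vertices of degree $i$ for each $i\ge0$; $\mathscr F({\bf r})$ is the set of plane forests of type ${\bf r}$. For such forests $n=\sum_{d\ge1}r_d=|I(F)|$ and $\ell=-\sum_{d\ge0}(d-1)r_d$ is the number of trees. *)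

From Stdlib Require Import List.
From mathcomp Require Import all_boot all_order all_algebra.
Set Implicit Arguments. Unset Strict Implicit. Unset Printing Implicit Defensive.
Import GRing.Theory Num.Theory.

Inductive ptree : Type := Node of seq ptree.

Definition pforest := seq ptree.

Fixpoint icount (t : ptree) : nat :=
  let: Node cs := t in (size cs != 0%N) + sumn (map icount cs).

Fixpoint degs (t : ptree) : seq nat :=
  let: Node cs := t in size cs :: flatten (map degs cs).

(* for each internal vertex v: the pair (d_v, h_v), h_v = hook length
   = number of internal vertices among the descendants of v (v included) *)
Fixpoint ivdata (t : ptree) : seq (nat * nat) :=
  let: Node cs := t in
  (if cs is [::] then [::] else [:: (size cs, icount (Node cs))])
    ++ flatten (map ivdata cs).

Definition forest_degs (F : pforest) : seq nat := flatten (map degs F).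
Definition forest_ivdata (F : pforest) : seq (nat * nat) := flatten (map ivdata F).

(* the type r = (r_0, r_1, ...) is given as a finite list; r_i = nth 0 r i
   (entries beyond the list are 0). F has type r iff it has exactly r_i
   vertices of degree i, for every i. *)
Definition of_type (r : seq nat) (F : pforest) : Prop :=
  forall i : nat, count_mem i (forest_degs F) = nth 0%N r i.

Definition nint (r : seq nat) : nat := \sum_(1 <= d < size r) nth 0%N r d.

Definition ell (r : seq nat) : int :=
  \sum_(d < size r) ((1 - (d : nat)%:Z) * (nth 0%N r d)%:Z)%R.

Local Open Scope ring_scope.

Definition hook_factor (d h : nat) : {poly rat} :=
  (((((d.-1 * h).+1)%:R : rat) *: 'X + ((1 - h%:Z)%:~R : rat)%:P)
     * ((d * h)%:R : rat)^-1%:P).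

Definition Hpoly_of (F : pforest) : {poly rat} :=
  \prod_(p <- forest_ivdata F) hook_factor p.1 p.2.

Definition rhs_poly (r : seq nat) : {poly rat} :=
  ((ell r)%:~R / ((nth 0%N r 0)%:R : rat))%:P
  * (\prod_(i < nint r) (((nth 0%N r 0)%:R : rat) *: 'X - (i%:R : rat)%:P))
  * ((\prod_(1 <= d < size r) ((nth 0%N r d)`!)%:R : rat)^-1)%:P.

From HB Require Import structures.
From Stdlib Require Import List.
From mathcomp Require Import all_boot all_order all_algebra.
From mathcomp Require Import zify ring.
Import GRing.Theory Num.Theory.
Set Implicit Arguments. Unset Strict Implicit. Unset Printing Implicit Defensive.

(* Both sides are polynomials in x, so it suffices to compare them at every
   natural number x = k.  Encode the type r = (r_0, r_1, r_2, ...) as r_0 and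
   the vector m = (r_1, r_2, ...), put w(m) = sum_d (d-1) r_d (so that
   ell = r_0 - w(m)), and let
     P_k(u, m) = u (u + k w(m) - 1)(u + k w(m) - 2) ... / m!
   with |m| - 1 factors in the product.  The right-hand side at x = k is
   P_k(ell k, m).  P_k satisfies the difference equation
     P_k(u + 1, m) - P_k(u, m) = sum_j P_k(u + j k, m - e_j),
   from which induction gives the convolution
     P_k(u + v, m) = sum_(s <= m) P_k(u, s) P_k(v, m - s),
   and the hook factors satisfy
     sum_j hook(j + 1, |s|)(k) P_k((j + 1) k, s - e_j) = P_k(k, s),
   which says that P_k(k, s) is the hook weight of all single trees with
   internal degree vector s.  Splitting a forest into its first tree and the
   remaining forest, the convolution then shows by induction on the number of
   vertices that the hook weights of all forests of type (r_0, m) add up to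
   P_k(ell k, m). *)

(** * Degree vectors *)

(* A degree vector m lists the numbers of internal vertices of degree 1, 2, ...
   (entry j counts degree j + 1), so [excess m] = sum_j j m_j = sum_d (d - 1) r_d. *)
Fixpoint excess (m : seq nat) : nat :=
  if m is _ :: m' then sumn m' + excess m' else 0.

Fixpoint prod_fact (m : seq nat) : nat :=
  if m is a :: m' then a`! * prod_fact m' else 1.

Fixpoint decr_nth (m : seq nat) (j : nat) : seq nat :=
  if m is a :: m' then (if j is j'.+1 then a :: decr_nth m' j' else a.-1 :: m')
  else [::].

Fixpoint subn_seq (m s : seq nat) : seq nat :=
  if m is a :: m' then (if s is b :: s' then (a - b) :: subn_seq m' s' else m)
  else m.

Fixpoint subvecs (m : seq nat) : seq (seq nat) :=
  if m is a :: m' then [seq i :: s | i <- iota 0 a.+1, s <- subvecs m']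
  else [:: [::]].

Lemma subvecs_cons a m :
  subvecs (a :: m) = [seq i :: s | i <- iota 0 a.+1, s <- subvecs m].
Proof. by []. Qed.

Lemma sum_nth m : \sum_(j < size m) nth 0 m j = sumn m.
Proof. by elim: m => [|a m IH]; rewrite ?big_ord0 // big_ord_recl /= IH. Qed.

Lemma excessE m : \sum_(j < size m) j * nth 0 m j = excess m.
Proof.
elim: m => [|a m IH]; first by rewrite big_ord0.
rewrite big_ord_recl /= mul0n add0n -IH -sum_nth -big_split /=.
by apply: eq_bigr => i _; rewrite /bump leq0n add0n add1n mulSn.
Qed.

Lemma sumn_eq0_nth m j : sumn m = 0 -> nth 0 m j = 0.
Proof. by elim: m j => [|a m IH] [|j] //=; [lia | move=> H; apply: IH; lia]. Qed.

Lemma nth_eq0_sumn m : (forall j, nth 0 m j = 0) -> sumn m = 0.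
Proof.
elim: m => [|a m IH] //= H.
by have := H 0; have := IH (fun j => H j.+1); simpl; lia.
Qed.

Lemma nth_leq_sumn m j : nth 0 m j <= sumn m.
Proof. elim: m j => [|a m IH] [|j] //=; [lia | have := IH j; lia]. Qed.

Lemma sumn_eq0_excess m : sumn m = 0 -> excess m = 0.
Proof. elim: m => [|a m IH] //=; lia. Qed.

Lemma nth_decr_nth m j i : nth 0 (decr_nth m j) i = nth 0 m i - (i == j).
Proof. by elim: m j i => [|a m IH] [|j] [|i] //=; rewrite ?IH; lia. Qed.

Lemma sumn_decr_nth m j : 0 < nth 0 m j -> (sumn (decr_nth m j)).+1 = sumn m.
Proof. by elim: m j => [|a m IH] [|j] //= H; [lia | have := IH j H; lia]. Qed.

Lemma excess_decr_nth m j : 0 < nth 0 m j -> excess (decr_nth m j) + j = excess m.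
Proof.
elim: m j => [|a m IH] [|j] //= H; first lia.
by have := IH j H; have := sumn_decr_nth H; lia.
Qed.

Lemma prod_fact_gt0 m : 0 < prod_fact m.
Proof. by elim: m => //= a m IH; rewrite muln_gt0 fact_gt0. Qed.

Lemma prod_fact_decr_nth m j :
  0 < nth 0 m j -> prod_fact m = nth 0 m j * prod_fact (decr_nth m j).
Proof.
elim: m j => [|a m IH] [|j] //= H; last by rewrite (IH j H); lia.
by case: a H => // a _; rewrite factS /=; lia.
Qed.

Lemma prod_fact_sumn_leq1 m : sumn m <= 1 -> prod_fact m = 1.
Proof. by elim: m => [|[|[|a]] m IH] //= H; rewrite IH //; lia. Qed.

Lemma nth_subn_seq m s i :
  size s = size m -> nth 0 (subn_seq m s) i = nth 0 m i - nth 0 s i.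
Proof. by elim: m s i => [|a m IH] [|b s] [|i] //= [/IH ->]. Qed.

Lemma subn_seq0 m : subn_seq m (nseq (size m) 0) = m.
Proof. by elim: m => //= a m ->; rewrite subn0. Qed.

Lemma mem_subvecs m s : (s \in subvecs m) = all2 leq s m.
Proof.
elim: m s => [|a m IH] [|b s] //; rewrite subvecs_cons.
- by apply/allpairsP => -[[i t] /= [_ _ ]].
- rewrite [all2 _ _ _]/=; apply/allpairsP/andP => [[[i t] [Hi Ht [-> ->]]]|[Hb Hs]].
    by rewrite mem_iota /= in Hi; rewrite -IH; split => //; lia.
  by exists (b, s); rewrite mem_iota IH; split => //; lia.
Qed.

Lemma uniq_subvecs m : uniq (subvecs m).
Proof.
elim: m => [|a m IH] //; rewrite subvecs_cons; apply: allpairs_uniq => //; first exact: iota_uniq.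
by move=> [i s] [j t] _ _ /= [-> ->].
Qed.

Lemma size_subvecs m s : s \in subvecs m -> size s = size m.
Proof. by rewrite mem_subvecs; elim: m s => [|a m IH] [|b s] //= /andP [_ /IH ->]. Qed.

Lemma subvecs0 m : nseq (size m) 0 \in subvecs m.
Proof. by rewrite mem_subvecs; elim: m => //= a m ->; rewrite andbT. Qed.

Lemma subvecs_nth m s i : s \in subvecs m -> nth 0 s i <= nth 0 m i.
Proof.
rewrite mem_subvecs.
by elim: m s i => [|a m IH] [|b s] [|i] //= /andP [H1 H2] //; exact: IH.
Qed.

Lemma subvecsP m s :
  size s = size m -> (forall i, nth 0 s i <= nth 0 m i) -> s \in subvecs m.
Proof.
rewrite mem_subvecs; elim: m s => [|a m IH] [|b s] //= [Hs] H.
by rewrite (H 0) IH // => i; exact: (H i.+1).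
Qed.

Lemma subn_seqK m s : s \in subvecs m ->
  excess (subn_seq m s) + excess s = excess m /\ sumn (subn_seq m s) + sumn s = sumn m.
Proof. by rewrite mem_subvecs; elim: m s => [|a m IH] [|b s] //= /andP [Hb /IH]; lia. Qed.

Lemma uniq_flatten_map (T U : eqType) (g : T -> seq U) (L : seq T) :
  uniq L -> {in L, forall x, uniq (g x)} ->
  (forall x y z, x \in L -> y \in L -> z \in g x -> z \in g y -> x = y) ->
  uniq (flatten (map g L)).
Proof.
elim: L => [|x L IH] //= /andP [HxL HL] Hu Hd.
rewrite cat_uniq Hu ?mem_head // IH //; last first.
- by move=> y z w Hy Hz; apply: Hd; rewrite in_cons ?Hy ?Hz orbT.
- by move=> y Hy; apply: Hu; rewrite in_cons Hy orbT.
rewrite andbT; apply/hasPn => z /flatten_mapP [y Hy Hz]; apply/negP => Hzx.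
have Hy' : y \in x :: L by rewrite in_cons Hy orbT.
have Exy := Hd x y z (mem_head _ _) Hy' Hzx Hz.
by move: HxL; rewrite Exy Hy.
Qed.

Lemma decr_nth_cons0 a m : decr_nth (a :: m) 0 = a.-1 :: m. Proof. by []. Qed.
Lemma decr_nth_consS a m j : decr_nth (a :: m) j.+1 = a :: decr_nth m j.
Proof. by []. Qed.
Lemma subn_seq_cons a m b s : subn_seq (a :: m) (b :: s) = (a - b) :: subn_seq m s.
Proof. by []. Qed.

Arguments decr_nth : simpl never.
Arguments subn_seq : simpl never.
Arguments subvecs : simpl never.

(** * Enumerating plane forests *)

(* [ptree] is a nested inductive type, for which Rocq generates no useful
   induction principle. *)
Fixpoint ptree_nested_ind (P : ptree -> Prop)
    (HP : forall cs, Forall P cs -> P (Node cs)) (t : ptree) : P t :=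
  let: Node cs := t in
  HP cs ((fix all_children (l : seq ptree) : Forall P l :=
            if l is c :: l' then Forall_cons c (ptree_nested_ind HP c) (all_children l')
            else Forall_nil P) cs).

Fixpoint gentree_of_ptree (t : ptree) : GenTree.tree nat :=
  let: Node cs := t in GenTree.Node 0 (map gentree_of_ptree cs).

Fixpoint ptree_of_gentree (g : GenTree.tree nat) : ptree :=
  if g is GenTree.Node _ gs then Node (map ptree_of_gentree gs) else Node [::].

Lemma gentree_of_ptreeK : cancel gentree_of_ptree ptree_of_gentree.
Proof.
elim/ptree_nested_ind => cs H /=; congr Node.
by elim: H => //= c l -> _ ->.
Qed.

HB.instance Definition _ := Equality.copy ptree (can_type gentree_of_ptreeK).

Lemma Node_inj : injective Node. Proof. by move=> x y []. Qed.

(* A tree with internal degree vector s is either a leaf or a root of degree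
   j + 1 above a forest of j + 1 trees of type (1 + excess s, s - e_j). *)
Definition trees_of (forests_of : nat -> seq nat -> seq pforest) (s : seq nat) :=
  (if sumn s == 0 then [:: Node [::]] else [::]) ++
  flatten [seq map Node (forests_of (1 + excess s) (decr_nth s j))
          | j <- [seq j <- iota 0 (size s) | 0 < nth 0 s j]].

(* The forests of type (a, m), listed by their first tree; the fuel N must
   exceed the number a + sumn m of vertices. *)
Fixpoint forests (N a : nat) (m : seq nat) {struct N} : seq pforest :=
  if N is N'.+1 then
    if a + sumn m == 0 then [:: [::]] else
    flatten [seq [seq t :: f | t <- trees_of (forests N') s,
                               f <- forests N' (a - (1 + excess s)) (subn_seq m s)]
            | s <- [seq s <- subvecs m | 1 + excess s <= a]]
  else [::].

Lemma mem_trees_of forests_of s t : t \in trees_of forests_of s ->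
  (sumn s = 0 /\ t = Node [::]) \/
  exists2 j, 0 < nth 0 s j &
    exists2 cs, cs \in forests_of (1 + excess s) (decr_nth s j) & t = Node cs.
Proof.
rewrite mem_cat => /orP [|].
  by case: eqP => // H; rewrite mem_seq1 => /eqP ->; left.
case/flatten_mapP => j; rewrite mem_filter => /andP [Hj _] /mapP [cs Hcs ->].
by right; exists j => //; exists cs.
Qed.

Lemma mem_forests N a m F : F \in forests N.+1 a m ->
  (a + sumn m = 0 /\ F = [::]) \/
  exists2 s, s \in subvecs m /\ 1 + excess s <= a &
    exists t f, [/\ t \in trees_of (forests N) s,
                    f \in forests N (a - (1 + excess s)) (subn_seq m s) & F = t :: f].
Proof.
rewrite /=; case: eqP => [H|H]; first by rewrite mem_seq1 => /eqP ->; left.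
case/flatten_mapP => s; rewrite mem_filter => /andP [Hs1 Hs2] /allpairsP [[t f] /= [Ht Hf ->]].
by right; exists s => //; exists t, f.
Qed.

Definition forest_spec (F : pforest) (a : nat) (m : seq nat) :=
  [/\ of_type (a :: m) F, size F + excess m = a & sumn (map icount F) = sumn m].

Lemma trees_of_spec N s t :
  (forall a m F, F \in forests N a m -> forest_spec F a m) ->
  t \in trees_of (forests N) s ->
  (forall i, count_mem i (degs t) = nth 0 (1 + excess s :: s) i) /\ icount t = sumn s.
Proof.
move=> IH /mem_trees_of [[Hs ->]|[j Hj [cs Hcs ->]]].
  split => //= -[|i] /=; first by rewrite sumn_eq0_excess.
  by rewrite sumn_eq0_nth.
move/IH: Hcs => [Hcs_type Hcs_size Hcs_icount].
have Hexc := excess_decr_nth Hj; have Hsum := sumn_decr_nth Hj.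
have Hsize : size cs = j.+1.
  by apply/eqP; rewrite -(eqn_add2r (excess (decr_nth s j))) Hcs_size; apply/eqP; lia.
split; last by rewrite /= Hcs_icount Hsize /=; lia.
move=> [|i] /=; rewrite Hsize -/(forest_degs cs) Hcs_type /=; first lia.
rewrite nth_decr_nth eqSS eq_sym; case: eqP => [->|_]; last by rewrite subn0.
by rewrite add1n subn1 prednK.
Qed.

Lemma forests_spec N a m F : F \in forests N a m -> forest_spec F a m.
Proof.
elim: N a m F => [//|N IH] a m F /mem_forests [[Ha ->]|[s [Hs Ha] [t [f [Ht Hf ->]]]]].
  split => //=; last by lia.
    by move=> [|i] /=; [lia | rewrite sumn_eq0_nth //; lia].
  by rewrite sumn_eq0_excess //; lia.
have [Ht_type Ht_icount] := trees_of_spec IH Ht.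
have [Hf_type Hf_size Hf_icount] := IH _ _ _ Hf.
have [Hexc Hsum] := subn_seqK Hs.
split; last by rewrite /= Hf_icount Ht_icount; lia.
  move=> i; rewrite /forest_degs /= count_cat -/(forest_degs f) Ht_type Hf_type.
  case: i => [|i] /=; first lia.
  by rewrite nth_subn_seq ?(size_subvecs Hs) //; have := subvecs_nth i Hs; lia.
by rewrite /=; lia.
Qed.

Definition degvec (K : nat) (t : ptree) : seq nat :=
  mkseq (fun i => count_mem i.+1 (degs t)) K.

Lemma nth_degvec K t i :
  (forall d, K < d -> count_mem d (degs t) = 0) ->
  nth 0 (degvec K t) i = count_mem i.+1 (degs t).
Proof.
move=> Hbig; case: (ltnP i K) => Hi; first by rewrite nth_mkseq.
by rewrite nth_default ?size_mkseq // Hbig.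
Qed.

Section Completeness.
Variable N : nat.
Hypothesis forests_complete_lt : forall F a m,
  size (forest_degs F) < N -> of_type (a :: m) F -> F \in forests N a m.

Lemma node_in_trees_of cs K (s := degvec K (Node cs)) :
  size (forest_degs cs) < N -> (forall d, K < d -> count_mem d (degs (Node cs)) = 0) ->
  count_mem 0 (degs (Node cs)) = 1 + excess s /\ Node cs \in trees_of (forests N) s.
Proof.
move=> Hsz Hbig; have Hs i := nth_degvec i Hbig; rewrite -/s in Hs.
case Ecs: cs => [|c0 cs'].
  have Hs0 : sumn s = 0 by apply: nth_eq0_sumn => i; rewrite Hs Ecs.
  by rewrite (sumn_eq0_excess Hs0) /trees_of Hs0 eqxx mem_cat mem_seq1 eqxx.
rewrite -Ecs; set j := (size cs).-1; have Hj : size cs = j.+1 by rewrite /j Ecs.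
have Hdeg : degs (Node cs) = j.+1 :: forest_degs cs by rewrite /= Hj.
have Hsj : 0 < nth 0 s j by rewrite Hs Hdeg /= eqxx.
set c := count_mem 0 (forest_degs cs) :: decr_nth s j.
have Hc : of_type c cs.
  move=> [|i] //=; rewrite nth_decr_nth Hs Hdeg /=.
  by rewrite eqSS eq_sym; case: eqP => [->|_]; rewrite ?add1n ?subn1 ?subn0.
have Hcs := forests_complete_lt Hsz Hc.
have [_ Hc_size _] := forests_spec Hcs.
have Hroot0 : count_mem 0 (degs (Node cs)) = 1 + excess s.
  rewrite Hdeg /=; have := excess_decr_nth Hsj.
  by rewrite -Hc_size Hj; lia.
split => //.
rewrite /trees_of mem_cat; apply/orP; right; apply/flatten_mapP; exists j.
  rewrite mem_filter Hsj mem_iota /= add0n size_mkseq ltnNge; apply/negP => HKj.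
  by move: Hsj; rewrite Hs Hbig.
apply/mapP; exists cs => //.
by move: Hroot0 Hcs; rewrite Hdeg /= => <-.
Qed.
End Completeness.

Lemma forests_complete N F a m :
  size (forest_degs F) < N -> of_type (a :: m) F -> F \in forests N a m.
Proof.
elim: N F a m => [//|N IH] [|[cs] f] a m Hsz HF.
  have Ha : a = 0 by move: (HF 0) => /= <-.
  have Hm : sumn m = 0 by apply: nth_eq0_sumn => i; move: (HF i.+1) => /= <-.
  by rewrite /= Ha Hm.
have Hcount i : count_mem i (forest_degs (Node cs :: f))
    = count_mem i (degs (Node cs)) + count_mem i (forest_degs f).
  by rewrite -count_cat.
have Hbig d : size m < d -> count_mem d (degs (Node cs)) = 0.
  by move=> Hd; have := HF d; rewrite Hcount nth_default /=; lia.
have Hsz_cs : size (forest_degs cs) < N.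
  by move: Hsz; rewrite /forest_degs /= size_cat; lia.
have [Hroot0 Ht] := node_in_trees_of IH Hsz_cs Hbig.
set s := degvec (size m) (Node cs) in Hroot0 Ht.
have Hs i : nth 0 s i = count_mem i.+1 (degs (Node cs)) by exact: nth_degvec.
have Hsub : s \in subvecs m.
  apply: subvecsP => [|i]; first by rewrite size_mkseq.
  by have := HF i.+1; rewrite Hcount Hs /=; lia.
have Ha : 1 + excess s <= a by have := HF 0; rewrite Hcount Hroot0 /=; lia.
have Hf : f \in forests N (a - (1 + excess s)) (subn_seq m s).
  apply: IH; first by move: Hsz; rewrite /forest_degs /= size_cat; lia.
  move=> [|i] /=; first by have := HF 0; rewrite Hcount Hroot0 /=; lia.
  by rewrite nth_subn_seq ?size_mkseq //; have := HF i.+1; rewrite Hcount Hs /=; lia.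
rewrite /= ifF; last by apply/negbTE; lia.
apply/flatten_mapP; exists s; first by rewrite mem_filter Ha Hsub.
by apply/allpairsP; exists (Node cs, f).
Qed.

Lemma size_forests_decr_nth N j s cs : 0 < nth 0 s j ->
  cs \in forests N (1 + excess s) (decr_nth s j) -> size cs = j.+1.
Proof.
move=> Hj /forests_spec [_ Hsz _]; have Hexc := excess_decr_nth Hj.
by apply/eqP; rewrite -(eqn_add2r (excess (decr_nth s j))) Hsz; apply/eqP; lia.
Qed.

Lemma uniq_trees_of N s :
  (forall a m, uniq (forests N a m)) -> uniq (trees_of (forests N) s).
Proof.
move=> Hu; rewrite /trees_of cat_uniq; apply/and3P; split; first by case: (_ == _).
  apply/hasPn => z /flatten_mapP [j]; rewrite mem_filter => /andP [Hj _] /mapP [cs Hcs ->].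
  case: (_ == _) => //; rewrite mem_seq1; apply/negP => /eqP [] E.
  by have := size_forests_decr_nth Hj Hcs; rewrite E.
apply: uniq_flatten_map.
- by rewrite filter_uniq // iota_uniq.
- by move=> j _; rewrite map_inj_uniq //; exact: Node_inj.
move=> j j' z; rewrite !mem_filter => /andP [Hj _] /andP [Hj' _].
move=> /mapP [cs Hcs ->] /mapP [cs' Hcs' [E]].
by have := size_forests_decr_nth Hj Hcs; rewrite E (size_forests_decr_nth Hj' Hcs') => -[].
Qed.

Lemma uniq_forests N a m : uniq (forests N a m).
Proof.
elim: N a m => [//|N IH] a m /=; case: ifP => // _.
apply: uniq_flatten_map.
- by rewrite filter_uniq // uniq_subvecs.
- move=> s _; apply: allpairs_uniq => //; first exact: uniq_trees_of.
  by move=> [t f] [t' f'] _ _ /= [-> ->].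
move=> s s' z; rewrite !mem_filter => /andP [_ Hs] /andP [_ Hs'].
move=> /allpairsP [[t f] /= [Ht _ ->]] /allpairsP [[t' f'] /= [Ht' _ [E _]]].
rewrite -{}E in Ht'.
have [T1 _] := trees_of_spec (@forests_spec N) Ht.
have [T2 _] := trees_of_spec (@forests_spec N) Ht'.
apply: (@eq_from_nth _ 0); first by rewrite (size_subvecs Hs) (size_subvecs Hs').
by move=> i _; have := T1 i.+1; rewrite T2.
Qed.

Lemma size_of_counts (l : seq nat) r :
  (forall i, count_mem i l = nth 0 r i) -> size l = sumn r.
Proof.
elim: l r => [|x l IH] r H; first by rewrite nth_eq0_sumn // => i; rewrite -H.
have Hx : 0 < nth 0 r x by rewrite -H /= eqxx.
rewrite /= (IH (decr_nth r x)); first by have := sumn_decr_nth Hx; lia.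
move=> i; rewrite nth_decr_nth -H /= eq_sym.
by case: (i == x); rewrite ?add1n ?add0n ?subn1 ?subn0.
Qed.

(** * The weight function *)

Local Open Scope ring_scope.

Lemma sum_subvecs_decr_nth (R : nmodType) m (Phi : seq nat -> seq nat -> nat -> R) :
  \sum_(s <- subvecs m) \sum_(j < size m)
      (if (0 < nth 0 s j)%N then Phi (decr_nth s j) (subn_seq m s) j else 0)
  = \sum_(j < size m) (if (0 < nth 0 m j)%N then
      \sum_(s <- subvecs (decr_nth m j)) Phi s (subn_seq (decr_nth m j) s) j else 0).
Proof.
elim: m Phi => [|a m IH] Phi; first by rewrite big_seq1 !big_ord0.
rewrite subvecs_cons big_allpairs_dep.
under eq_bigr => i _ do (under eq_bigr => s _ do rewrite big_ord_recl; rewrite big_split).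
rewrite big_split big_ord_recl.
under [X in _ + X = _]eq_bigr => i _ do under eq_bigr => s _ do
  under eq_bigr => j _ do rewrite lift0 /= decr_nth_consS subn_seq_cons.
under [X in _ = _ + X]eq_bigr => j _ do rewrite lift0 /= decr_nth_consS.
under [X in X + _ = _]eq_bigr => i _ do
  under eq_bigr => s _ do rewrite decr_nth_cons0 subn_seq_cons /=.
rewrite /= decr_nth_cons0.
congr (_ + _).
  rewrite big_cons big1 ?add0r; last by move=> s _.
  case: a => [|a]; first by rewrite big_nil.
  rewrite subvecs_cons big_allpairs_dep -[1%N]addn0 iotaDl big_map /=.
  by apply: eq_bigr => i _; apply: eq_bigr => s _; rewrite subn_seq_cons add1n subSS.
under eq_bigr => i _ do rewrite (IH (fun x y j => Phi (i :: x) ((a - i)%N :: y) j.+1)).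
rewrite exchange_big; apply: eq_bigr => j _; case: ifP => Hj; last by rewrite big1.
rewrite subvecs_cons big_allpairs_dep; apply: eq_bigr => i _; apply: eq_bigr => s _.
by rewrite subn_seq_cons.
Qed.

Lemma sum_nth_affine (R : comNzRingType) m (a b : R) :
  \sum_(j < size m) (nth 0%N m j)%:R * (a * j%:R + b)
  = a * (excess m)%:R + b * (sumn m)%:R.
Proof.
under eq_bigr => j _ do rewrite mulrDr.
rewrite big_split /= -sum_nth -excessE !natr_sum !mulr_sumr.
by congr (_ + _); apply: eq_bigr => j _; rewrite ?natrM; ring.
Qed.

Definition falling (y : rat) (n : nat) : rat := \prod_(i < n) (y - i%:R).

Lemma falling0 y : falling y 0 = 1.
Proof. by rewrite /falling big_ord0. Qed.

Lemma fallingS y n : falling y n.+1 = y * falling (y - 1) n.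
Proof.
rewrite /falling big_ord_recl subr0; congr (_ * _); apply: eq_bigr => i _.
by rewrite lift0 /= -addn1 natrD; ring.
Qed.

Lemma fallingSr y n : falling y n.+1 = falling y n * (y - n%:R).
Proof. by rewrite /falling big_ord_recr. Qed.

Lemma natr_prod_fact_neq0 m : (prod_fact m)%:R != 0 :> rat.
Proof. by rewrite pnatr_eq0 -lt0n prod_fact_gt0. Qed.

Section ForestWeight.
Variable k : nat.

(* This is P_k(u, m); by [sum_forests], at u = ell k it is the total hook
   weight at x = k of the forests with ell trees and internal degree vector m. *)
Definition forest_weight (u : rat) (m : seq nat) : rat :=
  if sumn m is n.+1
  then u * falling (u + (excess m * k)%:R - 1) n / (prod_fact m)%:R
  else 1.

Local Notation P := forest_weight.

Lemma forest_weight_sumn0 u m : sumn m = 0%N -> P u m = 1.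
Proof. by rewrite /P => ->. Qed.

Lemma forest_weightE u m n : sumn m = n.+1 ->
  P u m = u * falling (u + (excess m * k)%:R - 1) n / (prod_fact m)%:R.
Proof. by rewrite /P => ->. Qed.

Lemma forest_weight0 m : (0 < sumn m)%N -> P 0 m = 0.
Proof. by rewrite /P; case: (sumn m) => // n _; rewrite !mul0r. Qed.

Lemma forest_weight_decr_nth u m j n : (0 < nth 0%N m j)%N -> sumn m = n.+2 ->
  P (u + (j * k)%:R) (decr_nth m j)
  = (nth 0%N m j)%:R * (u + (j * k)%:R)
    * (falling (u + (excess m * k)%:R - 1) n / (prod_fact m)%:R).
Proof.
move=> Hj Hm; have Hs := sumn_decr_nth Hj.
rewrite (@forest_weightE _ _ n); last lia.
have -> : u + (j * k)%:R + (excess (decr_nth m j) * k)%:R = u + (excess m * k)%:R.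
  by rewrite -(excess_decr_nth Hj) mulnDl natrD addrAC addrA.
rewrite (prod_fact_decr_nth Hj) natrM.
have Hmj : (nth 0%N m j)%:R != 0 :> rat by rewrite pnatr_eq0 -lt0n.
by field; rewrite Hmj natr_prod_fact_neq0.
Qed.

Lemma forest_weight_decr_nth1 u m j : (0 < nth 0%N m j)%N -> sumn m = 1%N ->
  P u (decr_nth m j) = (nth 0%N m j)%:R.
Proof.
move=> Hj Hm; rewrite forest_weight_sumn0; last by have := sumn_decr_nth Hj; lia.
by have := nth_leq_sumn m j; rewrite Hm => Hle; have -> : nth 0%N m j = 1%N by lia.
Qed.

Lemma forest_weight_diff u m : P (u + 1) m - P u m =
  \sum_(j < size m) (if (0 < nth 0%N m j)%N then P (u + (j * k)%:R) (decr_nth m j) else 0).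
Proof.
case Em: (sumn m) => [|[|n]].
- by rewrite !forest_weight_sumn0 // subrr big1 // => j _; rewrite sumn_eq0_nth.
- rewrite !(forest_weightE _ Em) prod_fact_sumn_leq1 ?Em // !falling0.
  rewrite (eq_bigr (fun j : 'I_(size m) => (nth 0%N m j)%:R)).
    by rewrite -natr_sum sum_nth Em; field.
  move=> j _; case: ifP => [Hj|/negbT]; first exact: forest_weight_decr_nth1.
  by rewrite -leqNgt leqn0 => /eqP ->.
- rewrite (eq_bigr (fun j : 'I_(size m) => (nth 0%N m j)%:R * (k%:R * j%:R + u)
      * (falling (u + (excess m * k)%:R - 1) n / (prod_fact m)%:R))); last first.
    move=> j _; case: ifP => [Hj|/negbT]; last by rewrite -leqNgt leqn0 => /eqP ->; rewrite !mul0r.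
    by rewrite (forest_weight_decr_nth _ Hj Em) natrM; ring.
  rewrite -big_distrl /=.
  rewrite sum_nth_affine !(forest_weightE _ Em) fallingS fallingSr Em.
  rewrite (_ : u + 1 + (excess m * k)%:R - 1 - 1 = u + (excess m * k)%:R - 1); last ring.
  rewrite -[n.+2]addn2 natrD natrM.
  by field; rewrite natr_prod_fact_neq0.
Qed.

(* Induction on sumn m, then on u: both sides satisfy the difference equation
   in u, and at u = 0 only s = 0 contributes. *)
Lemma forest_weight_addn m (u v : nat) :
  P (u + v)%:R m = \sum_(s <- subvecs m) P u%:R s * P v%:R (subn_seq m s).
Proof.
elim: (sumn m).+1 {-2}m (ltnSn (sumn m)) u v => [//|N IHN] {}m Hm u v.
elim: u v => [|u IHu] v.
  rewrite add0n (bigD1_seq (nseq (size m) 0%N)) ?subvecs0 ?uniq_subvecs //=.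
  rewrite [P 0 _]forest_weight_sumn0 ?sumn_nseq ?muln0 // mul1r subn_seq0 big1_seq ?addr0 //.
  move=> s /andP [Hs0 Hs]; rewrite forest_weight0 ?mul0r // lt0n.
  by apply: contra Hs0 => /natnseq0P ->; rewrite (size_subvecs Hs).
have HS s : P u.+1%:R s = P u%:R s + \sum_(j < size s)
    (if (0 < nth 0%N s j)%N then P (u%:R + (j * k)%:R) (decr_nth s j) else 0).
  by rewrite -forest_weight_diff -natr1; ring.
under eq_bigr => s _ do rewrite HS mulrDl.
rewrite big_split /= -IHu.
rewrite (eq_big_seq (fun s => \sum_(j < size m) (if (0 < nth 0%N s j)%N then
   P (u%:R + (j * k)%:R) (decr_nth s j) * P v%:R (subn_seq m s) else 0))); last first.
  move=> s Hs; rewrite (size_subvecs Hs) big_distrl /=; apply: eq_bigr => j _.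
  by case: ifP => _; rewrite ?mul0r.
rewrite (sum_subvecs_decr_nth m (fun x y j => P (u%:R + (j * k)%:R) x * P v%:R y)).
rewrite addSn -natr1 -[P (_ + 1) m](subrK (P (u + v)%:R m)) forest_weight_diff addrC.
congr (_ + _); apply: eq_bigr => j _; case: ifP => Hj //.
rewrite -natrD -IHN; last by have := sumn_decr_nth Hj; lia.
by congr (P _ _); rewrite -!natrD; congr (_%:R); lia.
Qed.

Lemma hook_factorE d h (x : rat) :
  (hook_factor d h).[x] = (((d.-1 * h).+1)%:R * x + 1 - h%:R) / (d * h)%:R.
Proof.
by rewrite /hook_factor hornerM hornerD hornerZ hornerX !hornerC intrB addrA.
Qed.

Lemma forest_weight_by_root s : (0 < sumn s)%N ->
  \sum_(j < size s) (if (0 < nth 0%N s j)%N then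
     (hook_factor j.+1 (sumn s)).[k%:R] * P (j.+1 * k)%:R (decr_nth s j) else 0)
  = P k%:R s.
Proof.
have Ejk j : (j.+1 * k)%:R = k%:R + (j * k)%:R :> rat by rewrite -natrD mulSn.
case Es: (sumn s) => [|[|n]] // _.
- rewrite (forest_weightE _ Es) prod_fact_sumn_leq1 ?Es // falling0.
  rewrite (eq_bigr (fun j : 'I_(size s) => (nth 0%N s j)%:R * k%:R)).
    by rewrite -big_distrl /= -natr_sum sum_nth Es; field.
  move=> j _; case: ifP => [Hj|/negbT]; last by rewrite -leqNgt leqn0 => /eqP ->; rewrite mul0r.
  rewrite (forest_weight_decr_nth1 _ Hj Es) hook_factorE !muln1 /=.
  by field; rewrite nat1r pnatr_eq0.
- rewrite (eq_bigr (fun j : 'I_(size s) => (nth 0%N s j)%:R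
      * ((k%:R * n.+2%:R) * j%:R + (k%:R + 1 - n.+2%:R))
      * (k%:R * (falling (k%:R + (excess s * k)%:R - 1) n / (prod_fact s)%:R) / n.+2%:R))).
    rewrite -big_distrl /= sum_nth_affine Es (forest_weightE _ Es) fallingSr.
    by rewrite -[n.+2]addn2 natrD; field; rewrite natr_prod_fact_neq0 -natrD pnatr_eq0 addn2.
  move=> j _; case: ifP => [Hj|/negbT]; last by rewrite -leqNgt leqn0 => /eqP ->; rewrite !mul0r.
  rewrite Ejk (forest_weight_decr_nth _ Hj Es) hook_factorE -Ejk.
  rewrite -[n.+2]addn2 !natrM natrD; field.
  by rewrite -natrD pnatr_eq0 addn2 natr_prod_fact_neq0 nat1r pnatr_eq0.
Qed.

End ForestWeight.

(** * Summing the hook weights *)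

Lemma Hpoly_of_cons t f : Hpoly_of (t :: f) = Hpoly_of [:: t] * Hpoly_of f.
Proof. by rewrite /Hpoly_of /forest_ivdata /= big_cat /= cats0. Qed.

Lemma Hpoly_of_node cs : Hpoly_of [:: Node cs] =
  (if cs is [::] then 1 else hook_factor (size cs) (icount (Node cs))) * Hpoly_of cs.
Proof.
rewrite /Hpoly_of /forest_ivdata /= cats0.
by case: cs => [|c cs] /=; rewrite ?big_nil ?mul1r // big_cons.
Qed.

Section ForestSums.
Variable k : nat.
Local Notation P := (forest_weight k).
Local Notation Pv F := (Hpoly_of F).[k%:R].

Lemma sum_trees_of N s :
  (forall a m, (a + sumn m < N)%N ->
     \sum_(F <- forests N a m) Pv F = P ((a - excess m) * k)%:R m) ->
  (1 + excess s + sumn s <= N)%N ->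
  \sum_(t <- trees_of (forests N) s) Pv [:: t] = P k%:R s.
Proof.
move=> IH Hb; rewrite /trees_of big_cat /= big_flatten /= big_map.
case Es: (sumn s) => [|n] /=.
  rewrite big_seq1 Hpoly_of_node mul1r /Hpoly_of big_nil hornerC.
  rewrite big1_seq ?addr0 ?forest_weight_sumn0 // => j.
  by rewrite mem_filter sumn_eq0_nth.
rewrite big_nil add0r big_filter big_mkcond /=.
rewrite (_ : iota 0 (size s) = index_iota 0 (size s)); last by rewrite /index_iota subn0.
rewrite big_mkord -(forest_weight_by_root k (s := s)) ?Es //.
apply: eq_bigr => j _; case: ifP => Hj //.
rewrite big_map (eq_big_seq (fun cs => (hook_factor j.+1 (sumn s)).[k%:R] * Pv cs)).
  rewrite -big_distrr /= IH; last by have := sumn_decr_nth Hj; have := excess_decr_nth Hj; lia.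
  by rewrite Es; congr (_ * P _ _); congr (_%:R); have := excess_decr_nth Hj; lia.
move=> cs Hcs; rewrite Hpoly_of_node hornerM.
have Hsz := size_forests_decr_nth Hj Hcs.
have [_ _ Hic] := forests_spec Hcs.
have Hic' : icount (Node cs) = sumn s.
  rewrite /= -/(sumn _) Hic Hsz; have := sumn_decr_nth Hj; lia.
by rewrite -Hsz -Hic'; case: cs Hsz {Hcs Hic Hic'}.
Qed.

Lemma sum_forests N a m : (a + sumn m < N)%N ->
  \sum_(F <- forests N a m) Pv F = P ((a - excess m) * k)%:R m.
Proof.
elim: N a m => [//|N IH] a m Hb /=; case: ifP => [/eqP Hz|Hz].
  have Hm : sumn m = 0%N by lia.
  by rewrite big_seq1 /Hpoly_of big_nil hornerC forest_weight_sumn0.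
rewrite big_flatten /= big_map big_filter big_seq_cond.
rewrite (eq_bigr (fun s => P k%:R s * P ((a - (1 + excess s) - excess (subn_seq m s)) * k)%:R
    (subn_seq m s))); last first.
  move=> s /andP [Hs Ha]; have [Hexc Hsum] := subn_seqK Hs.
  rewrite big_allpairs_dep.
  under eq_bigr => t _ do (under eq_bigr => f _ do rewrite Hpoly_of_cons hornerM;
    rewrite -big_distrr /=).
  by rewrite -big_distrl /= IH ?(sum_trees_of IH) //; lia.
have [Ha|Ha] := leqP (1 + excess m) a.
  rewrite (eq_bigl (fun s => s \in subvecs m)); last first.
    move=> s /=; case Hs: (s \in subvecs m) => //=.
    by have [Hexc _] := subn_seqK Hs; apply/idP; lia.
  rewrite -big_seq (eq_big_seq (fun s => P k%:R s * P ((a - excess m).-1 * k)%:R (subn_seq m s))).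
    by rewrite -forest_weight_addn -mulSn prednK ?subn_gt0 //; lia.
  move=> s Hs; have [Hexc _] := subn_seqK Hs.
  by congr (_ * P _ _); congr (_%:R); lia.
rewrite (_ : a - excess m = 0)%N ?mul0n; last lia.
rewrite forest_weight0; last by rewrite lt0n; apply/eqP => /[dup] /sumn_eq0_excess; lia.
rewrite big1 // => s /andP [Hs Hle]; have [Hexc Hsum] := subn_seqK Hs.
rewrite (_ : (a - (1 + excess s) - excess (subn_seq m s)) * k = 0)%N; last lia.
rewrite forest_weight0 ?mulr0 //.
by rewrite lt0n; apply/eqP => /sumn_eq0_excess; lia.
Qed.
End ForestSums.

(** * The right-hand side *)

Lemma nint_cons a m : nint (a :: m) = sumn m.
Proof. by rewrite /nint big_add1 /= big_mkord -sum_nth. Qed.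

Lemma ell_cons a m : ell (a :: m) = a%:Z - (excess m)%:Z.
Proof.
rewrite /ell big_ord_recl /= mul1r; congr (_ + _).
rewrite -excessE -natz natr_sum -sumrN; apply: eq_bigr => j _.
by rewrite /bump /= add1n natz add0n PoszM -[j.+1]addn1 PoszD; ring.
Qed.

Lemma prod_fact_cons a m :
  \prod_(1 <= d < size (a :: m)) ((nth 0%N (a :: m) d)`!)%:R = (prod_fact m)%:R :> rat.
Proof.
rewrite big_add1 /= big_mkord.
elim: m => [|b m IH]; first by rewrite big_ord0.
by rewrite big_ord_recl /= IH natrM.
Qed.

Lemma rhs_poly_eval k a m : (excess m < a)%N ->
  (rhs_poly (a :: m)).[k%:R] = forest_weight k ((a - excess m) * k)%:R m.
Proof.
move=> Ha.
rewrite /rhs_poly nint_cons prod_fact_cons ell_cons !hornerM !hornerC horner_prod /=.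
rewrite (eq_bigr (fun i : 'I_(sumn m) => (a * k)%:R - i%:R)); last first.
  by move=> i _; rewrite hornerD hornerN hornerZ hornerX hornerC natrM.
rewrite -/(falling _ _) intrB.
have Ha0 : a%:R != 0 :> rat by rewrite pnatr_eq0; lia.
case Es: (sumn m) => [|n].
  rewrite forest_weight_sumn0 // falling0 prod_fact_sumn_leq1 ?Es // sumn_eq0_excess //.
  by rewrite mulr1 subr0 mulfV // invr1.
rewrite (forest_weightE _ _ Es) fallingS.
have -> : ((a - excess m) * k)%:R + (excess m * k)%:R = (a * k)%:R :> rat.
  by rewrite -natrD -mulnDl subnK //; lia.
rewrite -!pmulrn !natrM natrB; last lia.
by field; rewrite Ha0 natr_prod_fact_neq0.
Qed.

Lemma poly_eq_nat (p q : {poly rat}) : (forall k : nat, p.[k%:R] = q.[k%:R]) -> p = q.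
Proof.
move=> H; apply/eqP; rewrite -subr_eq0; apply/negPn/negP => Hpq.
have := @max_poly_roots _ (p - q) [seq i%:R | i <- iota 0 (size (p - q))] Hpq.
rewrite size_map size_iota ltnn => Hc; apply: notF; apply: Hc.
  by apply/allP => x /mapP [i _ ->]; rewrite /root hornerD hornerN H subrr.
by rewrite map_inj_uniq ?iota_uniq // => x y /eqP; rewrite eqr_nat => /eqP.
Qed.

Lemma InP (T : eqType) (x : T) s : reflect (In x s) (x \in s).
Proof.
elim: s => [|y s IH] /=; first by constructor.
rewrite in_cons; apply: (iffP orP) => [[/eqP ->|/IH]|[->|/IH]];
  by [left | right | rewrite eqxx; left].
Qed.

Lemma NoDupP (T : eqType) (s : seq T) : reflect (NoDup s) (uniq s).
Proof.
elim: s => [|x s IH] /=; first by do 2 constructor.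
apply: (iffP andP) => [[/InP Hx /IH Hs]|H]; first by constructor.
by inversion H; split; [apply/InP | apply/IH].
Qed.

Theorem theorem2p3 (r : seq nat) (hl : 1 <= ell r) :
  (exists s : seq pforest, NoDup s /\ (forall F, In F s <-> of_type r F)) /\
  (forall s : seq pforest, NoDup s -> (forall F, In F s <-> of_type r F) ->
     \sum_(F <- s) Hpoly_of F = rhs_poly r).
Proof.
case: r hl => [|a m] hl; first by rewrite /ell big_ord0 in hl.
have Ha : (excess m < a)%N by move: hl; rewrite ell_cons; lia.
set s0 := forests (a + sumn m).+1 a m.
have Hs0 F : In F s0 <-> of_type (a :: m) F.
  split => [/InP /forests_spec [] //|HF]; apply/InP/forests_complete => //.
  by rewrite (size_of_counts HF).
split; first by exists s0; split => //; apply/NoDupP/uniq_forests.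
move=> s /NoDupP Hs HsF.
have Hperm : perm_eq s s0.
  apply: uniq_perm => [//||F]; first exact: uniq_forests.
  by apply/idP/idP => /InP Hin; apply/InP; [apply/Hs0/HsF | apply/HsF/Hs0].
rewrite (perm_big _ Hperm); apply: poly_eq_nat => k.
by rewrite horner_sum sum_forests // rhs_poly_eval.
Qed.
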